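(* Let $A$ be an $n\times n$ matrix with a designated set of large positions, and let $(X,Y)$ be a restriction with $m=|X|\ge1$ that is $q$-good for some $q<\frac{1}{4m}$. Then $(X,Y)$ has a $0$-strong line, i.e. a row $i\in X$ with $(i,j)$ large for all $j\in Y$, or a column $j\in Y$ with $(i,j)$ large for all $i\in X$.
   Context: Let $A=(a_{ij})_{i,j\in[n]}$ with a designated set $L\subseteq[n]\times[n]$ of large positions. A restriction is $(X,Y)$ with $X,Y\subseteq[n]$, $|X|=|Y|$; a generalized diagonal of $A[X,Y]$ is $\{(i,\sigma(i)):i\in X\}$ for a bijection $\sigma:X\to Y$, random meaning uniform $\sigma$; it is good if it contains exactly one large position; $(X,Y)$ is $q$-good if a random generalized diagonal is good with probability $\ge1-q$. *)

From mathcomp Require Import all_boot all_order all_algebra.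
Set Implicit Arguments. Unset Strict Implicit. Unset Printing Implicit Defensive.
Import Order.TTheory GRing.Theory Num.Theory.

(* Positions are pairs (i, j) : 'I_n * 'I_n; the set L of large positions is a
   {set 'I_n * 'I_n}.  A restriction is (X, Y) with #|X| = #|Y|. *)

Definition elemsX (n : nat) (X : {set 'I_n}) := {x : 'I_n | x \in X}.

(* Bijections sigma : X -> Y, encoded as finite functions on elements of X
   that are injective with values in Y (bijective as #|X| = #|Y|). *)
Definition bijections (n : nat) (X Y : {set 'I_n}) :
  {set {ffun elemsX X -> 'I_n}} :=
  [set s : {ffun elemsX X -> 'I_n} | injectiveb s && [forall x, s x \in Y]].

Definition good_diag (n : nat) (L : {set 'I_n * 'I_n}) (X : {set 'I_n})
  (s : {ffun elemsX X -> 'I_n}) : bool :=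
  #|[set x : elemsX X | (val x, s x) \in L]| == 1%N.

Definition prob_good (n : nat) (L : {set 'I_n * 'I_n}) (X Y : {set 'I_n}) : rat :=
  (#|[set s in bijections X Y | good_diag L s]|%:R / #|bijections X Y|%:R)%R.

Definition qgood (n : nat) (L : {set 'I_n * 'I_n}) (X Y : {set 'I_n}) (q : rat) : Prop :=
  #|X| = #|Y| /\ (1 - q <= prob_good L X Y)%R.

Definition has_0strong_line (n : nat) (L : {set 'I_n * 'I_n}) (X Y : {set 'I_n}) : Prop :=
  (exists2 i, i \in X & forall j, j \in Y -> (i, j) \in L) \/
  (exists2 j, j \in Y & forall i, i \in X -> (i, j) \in L).

From mathcomp Require Import all_boot all_order all_algebra.
From mathcomp Require Import fingroup perm.
From mathcomp Require Import lra zify.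
Import Order.TTheory GRing.Theory Num.Theory.
Set Implicit Arguments. Unset Strict Implicit. Unset Printing Implicit Defensive.

(* Let B be the set of bijections X -> Y and Bad the bijections
   whose diagonal is not good.  q-goodness with q < 1/(4m) gives
   4m|Bad| < |B|.  Every fiber F(a,j) = {s in B | s a = j} (a in X, j in Y)
   has at least |B|/m elements, since the value swap j <-> j' embeds each
   fiber F(a,j') into F(a,j); hence 4|Bad| < |F(a,j)| for all a, j.
   Conversely, suppose (a,j) is large while row a misses a large entry at
   (a,k) and column j misses one at (c,j).  A good s in F(a,j) has (a,j) as
   its only large position; composing s with the transposition (a b), where
   s b = k, with (a c), or with the 3-cycle obtained from both, yields a bad
   bijection, and each of these three relabellings is injective on the part
   of F(a,j) where it is used.  So |F(a,j)| <= |Bad| + 3|Bad|, a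
   contradiction.  If X x Y contains no large position at all, every
   bijection is bad and again |F(a,j)| <= |Bad|. *)

Section GeneralizedDiagonals.
Variables (n : nat) (L : {set 'I_n * 'I_n}) (X Y : {set 'I_n}).
Local Notation T := (elemsX X).
Local Notation B := (bijections X Y).
Implicit Types (s t : {ffun T -> 'I_n}) (p : {perm T}).

Lemma bijP s : reflect (injective s /\ forall x, s x \in Y) (s \in B).
Proof.
rewrite inE; apply: (iffP andP) => [[/injectiveP s_inj /forallP sY]|[s_inj sY]].
  by [].
by split; [apply/injectiveP | apply/forallP].
Qed.

Lemma bij_surj s y : #|X| = #|Y| -> s \in B -> y \in Y -> exists x, s x = y.
Proof.
move=> hXY /bijP [s_inj sY] yY.
have img_sub : [set s x | x : T] \subset Y by apply/subsetP => z /imsetP [x _ ->].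
have [_] := subset_leqif_card img_sub.
rewrite card_imset // card_sig -hXY (eq_card (B := X)) // eqxx.
by move=> /esym /subsetP /(_ _ yY) /imsetP [x _ ->]; exists x.
Qed.

Definition good_set := [set s in B | good_diag L s].
Definition bad_set := B :\: good_set.

Lemma in_bad s : (s \in bad_set) = (s \in B) && ~~ good_diag L s.
Proof. by rewrite in_setD in_set; case: (s \in B); rewrite ?andbF ?andbT. Qed.

Lemma bad_of_no_large s :
  s \in B -> (forall z, (val z, s z) \notin L) -> s \in bad_set.
Proof.
move=> sB no_large; rewrite in_bad sB /good_diag.
suff -> : [set x : T | (val x, s x) \in L] = set0 by rewrite cards0.
by apply/setP => z; rewrite !inE (negbTE (no_large z)).
Qed.

Lemma bad_of_two_large s z1 z2 : s \in B -> z1 != z2 ->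
  (val z1, s z1) \in L -> (val z2, s z2) \in L -> s \in bad_set.
Proof.
move=> sB z12 l1 l2; rewrite in_bad sB /good_diag.
have : [set z1; z2] \subset [set x : T | (val x, s x) \in L].
  by apply/subsetP => z; rewrite !inE => /orP [] /eqP ->.
by move=> /subset_leq_card; rewrite cards2 z12; case: #|_| => [|[|]].
Qed.

Lemma good_unique_large s a z :
  good_diag L s -> (val a, s a) \in L -> z != a -> (val z, s z) \notin L.
Proof.
move=> /cards1P [x0 large_eq] la za; apply/negP => lz.
have : a \in [set x : T | (val x, s x) \in L] by rewrite inE.
have : z \in [set x : T | (val x, s x) \in L] by rewrite inE.
by rewrite large_eq !inE => /eqP zx /eqP ax; rewrite zx ax eqxx in za.
Qed.

Definition relabel s p : {ffun T -> 'I_n} := [ffun z => s (p z)].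

Lemma relabel_bij s p : s \in B -> relabel s p \in B.
Proof.
move=> /bijP [s_inj sY]; apply/bijP; split => [z1 z2|z]; rewrite !ffunE //.
by move=> /s_inj /perm_inj.
Qed.

Lemma relabel_inj p : injective (relabel^~ p).
Proof.
move=> s t /ffunP st; apply/ffunP => z.
by have := st ((p^-1)%g z); rewrite !ffunE permKV.
Qed.

Lemma card_le_bad (S : {set {ffun T -> 'I_n}}) (g : {ffun T -> 'I_n} -> {perm T}) :
  {in S, forall s, relabel s (g s) \in bad_set} ->
  {in S &, forall s t, relabel s (g s) = relabel t (g t) -> g s = g t} ->
  #|S| <= #|bad_set|.
Proof.
move=> to_bad same_perm.
have inj : {in S &, injective (fun s => relabel s (g s))}.
  by move=> s t sS tS st; apply: (@relabel_inj (g s)); rewrite {2}(same_perm s t).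
rewrite -(card_in_imset inj); apply/subset_leq_card/subsetP => u.
by case/imsetP => s sS ->; exact: to_bad.
Qed.

Definition fiber a j := [set s in B | s a == j].

(* Swapping the values j and j' embeds one fiber into another. *)
Lemma fiber_le a j j' : j \in Y -> j' \in Y -> #|fiber a j'| <= #|fiber a j|.
Proof.
move=> jY j'Y; pose swap s : {ffun T -> 'I_n} := [ffun z => tperm j j' (s z)].
have swap_inj : injective swap.
  move=> s t /ffunP st; apply/ffunP => z.
  by have := st z; rewrite !ffunE => /perm_inj.
rewrite -(card_imset _ swap_inj); apply/subset_leq_card/subsetP => u.
case/imsetP => s; rewrite inE => /andP [/bijP [s_inj sY] /eqP sa] ->.
rewrite inE ffunE sa tpermR eqxx andbT; apply/bijP; split.
  by move=> z1 z2; rewrite !ffunE => /perm_inj /s_inj.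
by move=> z; rewrite ffunE; case: tpermP => [_|_|_ _]; rewrite ?sY.
Qed.

Lemma card_bij_le_fiber a j : j \in Y -> #|B| <= #|Y| * #|fiber a j|.
Proof.
move=> jY; rewrite -sum1_card (partition_big (fun s => s a) (mem Y)).
  rewrite -sum_nat_const; apply: leq_sum => j' j'Y.
  apply: leq_trans (fiber_le a jY j'Y); rewrite -sum1_card.
  by apply: eq_leq; apply: eq_bigl => s; rewrite [in RHS]inE.
by move=> s /bijP [_]; apply.
Qed.

Lemma qgood_few_bad (q : rat) : 0 < #|X| ->
  (q < 1 / (4 * #|X|%:R))%R -> (1 - q <= prob_good L X Y)%R ->
  4 * #|X| * #|bad_set| < #|B|.
Proof.
move=> X_pos q_small; rewrite /prob_good -/good_set => prob_ge.
have m_ge1 : (1 <= #|X|%:R :> rat)%R by rewrite ler1n.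
rewrite ltr_pdivlMr ?mulr_gt0 ?ltr0n // in q_small.
have [B0 | B_pos] := posnP #|B|.
  move: prob_ge; rewrite B0 invr0 mulr0 subr_le0 => q_ge1.
  exfalso; nra.
rewrite ler_pdivlMr ?ltr0n // in prob_ge.
have good_sub : good_set \subset B by apply/subsetP => s /setIdP [].
rewrite cardsD (setIidPr good_sub) -(ltr_nat rat) !natrM natrB ?subset_leq_card //.
have : (0 < #|B|%:R :> rat)%R by rewrite ltr0n.
nra.
Qed.

Lemma bad_lt_fiber a j : #|X| = #|Y| -> 0 < #|X| ->
  4 * #|X| * #|bad_set| < #|B| -> j \in Y -> 4 * #|bad_set| < #|fiber a j|.
Proof.
move=> hXY X_pos few_bad jY; have := leq_trans few_bad (card_bij_le_fiber a jY).
by rewrite -hXY [4 * _]mulnC -mulnA ltn_pmul2l.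
Qed.

Section RepairLargeEntry.
Hypothesis hXY : #|X| = #|Y|.
Variables (a c : T) (j k : 'I_n).
Hypotheses (l_aj : (val a, j) \in L) (nl_ak : (val a, k) \notin L)
  (kY : k \in Y) (nl_cj : (val c, j) \notin L).

Definition pre_k s : T := odflt a [pick b | s b == k].

Lemma pre_kP s : s \in B -> s (pre_k s) = k.
Proof.
move=> sB; rewrite /pre_k; case: pickP => [b /eqP //|] /=.
by have [x <-] := bij_surj hXY sB kY => /(_ x); rewrite eqxx.
Qed.

Lemma c_neq_a : c != a.
Proof. by apply: contraNneq nl_cj => ->. Qed.

(* The good bijections of the fiber; each has (a, j) as its only large
   position, and pre_k s differs from a because (a, k) is not large. *)
Definition good_fiber := fiber a j :&: good_set.

Lemma good_fiberP s : s \in good_fiber ->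
  [/\ s \in B, s a = j, pre_k s != a & forall z, z != a -> (val z, s z) \notin L].
Proof.
rewrite in_setI => /andP [/setIdP [sB /eqP sa] /setIdP [_ s_good]].
split=> //; last by move=> z; apply: good_unique_large; rewrite ?sa.
by apply: contraNneq nl_ak => pre_a; rewrite -(pre_kP sB) pre_a sa.
Qed.

Lemma relabel_pre_k_inj (S : {set {ffun T -> 'I_n}}) (h : T -> {perm T}) :
  {in S, forall s, s \in B /\ relabel s (h (pre_k s)) (pre_k s) = j} ->
  {in S &, forall s t, relabel s (h (pre_k s)) = relabel t (h (pre_k t)) ->
                       h (pre_k s) = h (pre_k t)}.
Proof.
move=> at_j s t /at_j [sB sj] /at_j [_ tj] st; congr h.
have /bijP [u_inj _] := relabel_bij (h (pre_k s)) sB.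
by apply: u_inj; rewrite sj st tj.
Qed.

(* First case: (pre_k s, j) is not large; swap a and pre_k s. *)
Definition fiber_part1 := [set s in good_fiber | (val (pre_k s), j) \notin L].

Lemma fiber_part1_le : #|fiber_part1| <= #|bad_set|.
Proof.
have swap_j s : s \in fiber_part1 ->
    s \in B /\ relabel s (tperm a (pre_k s)) (pre_k s) = j.
  by case/setIdP => /good_fiberP [sB sa _ _] _; rewrite ffunE tpermR.
apply: (card_le_bad (g := fun s => tperm a (pre_k s))).
  move=> s /setIdP [/good_fiberP [sB sa _ others] nl].
  apply: bad_of_no_large; first exact: relabel_bij.
  move=> z; rewrite ffunE; case: tpermP => [->|->|/eqP za _].
  - by rewrite pre_kP.
  - by rewrite sa.
  - exact: others.
exact: (relabel_pre_k_inj (h := tperm a) swap_j).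
Qed.

(* Second case: (a, s c) is not large; swap a and c. *)
Definition fiber_part2 := [set s in good_fiber | (val a, s c) \notin L].

Lemma fiber_part2_le : #|fiber_part2| <= #|bad_set|.
Proof.
apply: (card_le_bad (g := fun=> tperm a c)) => // s.
case/setIdP => /good_fiberP [sB sa _ others] nl.
apply: bad_of_no_large; first exact: relabel_bij.
move=> z; rewrite ffunE; case: tpermP => [->|->|/eqP za _] //.
- by rewrite sa.
- exact: others.
Qed.

(* Third case: both are large; the 3-cycle a -> c -> pre_k s -> a creates the
   two large positions a and pre_k s. *)
Definition fiber_part3 :=
  [set s in good_fiber | ((val (pre_k s), j) \in L) && ((val a, s c) \in L)].

Lemma fiber_part3_le : #|fiber_part3| <= #|bad_set|.
Proof.
pose cyc b : {perm T} := (tperm a c * tperm a b)%g.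
have cyc_spec s : s \in fiber_part3 -> [/\ s \in B, relabel s (cyc (pre_k s)) a = s c,
    relabel s (cyc (pre_k s)) (pre_k s) = j, pre_k s != a
    & [&& (val (pre_k s), j) \in L & (val a, s c) \in L]].
  case/setIdP => /good_fiberP [sB sa pa _] large2.
  have pc : pre_k s != c by apply: contraNneq nl_cj => <-; case/andP: large2.
  rewrite !ffunE !permM tpermL (tpermD _ pc) ?(eq_sym a) ?c_neq_a //.
  rewrite (tpermD (y := c)) ?tpermR ?sa; first by split.
    by rewrite eq_sym.
  by rewrite eq_sym.
apply: (card_le_bad (g := fun s => cyc (pre_k s))).
  move=> s /cyc_spec [sB at_a at_pre pa /andP [l_pre l_ac]].
  apply: (bad_of_two_large (relabel_bij _ sB) pa); first by rewrite at_pre.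
  by rewrite at_a.
by apply: (relabel_pre_k_inj (h := cyc)) => s /cyc_spec [].
Qed.

(* The three cases cover the good part of the fiber; the rest is bad. *)
Lemma fiber_le_4bad : #|fiber a j| <= 4 * #|bad_set|.
Proof.
have cover : good_fiber \subset fiber_part1 :|: fiber_part2 :|: fiber_part3.
  apply/subsetP => s s_good.
  have in_part (P : pred {ffun T -> 'I_n}) : (s \in [set t in good_fiber | P t]) = P s.
    by apply/setIdP/idP => [[]|].
  rewrite !in_setU /fiber_part1 /fiber_part2 /fiber_part3 !in_part.
  by case: ((val (pre_k s), j) \in L); case: ((val a, s c) \in L).
have good_le : #|good_fiber| <= 3 * #|bad_set|.
  apply: leq_trans (subset_leq_card cover) _.
  apply: leq_trans (leq_card_setU _ _) _.
  have := (leq_card_setU fiber_part1 fiber_part2).1.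
  have := fiber_part1_le; have := fiber_part2_le; have := fiber_part3_le; lia.
have bad_le : #|fiber a j :\: good_set| <= #|bad_set|.
  by apply/subset_leq_card/setSD/subsetP => s /setIdP [].
rewrite -(cardsID good_set (fiber a j)) -/good_fiber; lia.
Qed.
End RepairLargeEntry.

(* Dichotomy: either X x Y has a 0-strong line, or some fiber has at most
   4 #|bad_set| elements (by the repair argument if there is a large position
   in X x Y, and because every bijection is bad otherwise). *)
Lemma strong_line_or_small_fiber : #|X| = #|Y| -> 0 < #|X| ->
  has_0strong_line L X Y \/
  exists a, exists2 j, j \in Y & #|fiber a j| <= 4 * #|bad_set|.
Proof.
move=> hXY X_pos.
case: (boolP [exists a : T, exists j, (j \in Y) && ((val a, j) \in L)]).
  case/existsP=> a /existsP [j /andP [jY l_aj]].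
  case: (boolP [forall k, (k \in Y) ==> ((val a, k) \in L)]) => [/forallP row|].
    by left; left; exists (val a) => [|k kY]; [exact: valP | exact: implyP (row k) kY].
  rewrite negb_forall => /existsP [k]; rewrite negb_imply => /andP [kY nl_ak].
  case: (boolP [forall c : T, (val c, j) \in L]) => [/forallP col|].
    by left; right; exists j => // i iX; have := col (exist _ i iX).
  rewrite negb_forall => /existsP [c nl_cj].
  by right; exists a, j; last exact: fiber_le_4bad nl_ak kY nl_cj.
rewrite negb_exists => /forallP no_large; right.
have [a0 a0X] : exists a, a \in X by apply/set0Pn; rewrite -card_gt0.
have [j0 j0Y] : exists j, j \in Y by apply/set0Pn; rewrite -card_gt0 -hXY.
exists (exist _ a0 a0X); exists j0 => //.
have all_bad : fiber (exist _ a0 a0X) j0 \subset bad_set.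
  apply/subsetP => s /setIdP [sB _]; apply: bad_of_no_large => // z.
  have /bijP [_ sY] := sB.
  by have := no_large z; rewrite negb_exists => /forallP /(_ (s z)); rewrite sY.
by apply: leq_trans (subset_leq_card all_bad) _; rewrite leq_pmull.
Qed.
End GeneralizedDiagonals.

Theorem lemma2p15 (R : Type) (n : nat) (A : 'M[R]_n) (L : {set 'I_n * 'I_n})
  (X Y : {set 'I_n}) (q : rat) :
  #|X| = #|Y| -> (1 <= #|X|)%N ->
  (q < 1 / (4 * #|X|%:R))%R ->
  qgood L X Y q ->
  has_0strong_line L X Y.
Proof.
move=> hXY X_pos q_small [_ prob_ge].
have few_bad := qgood_few_bad X_pos q_small prob_ge.
have [//|[a [j jY small]]] := strong_line_or_small_fiber L hXY X_pos.
by have := bad_lt_fiber a hXY X_pos few_bad jY; rewrite ltnNge small.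
Qed.
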